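(* Let $P_{X,Y}$ be a non-trivial primitive on finite sets $\mathcal X\times\mathcal Y$. Then its canonical embedding $|\psi_{\vec 0}\rangle=\sum_{x,y}\sqrt{P_{X,Y}(x,y)}\,|x\rangle_A|y\rangle_B$ is a non-trivial regular embedding, i.e. $S(X\searrow Y\,|\,B)>0$ and $S(Y\searrow X\,|\,A)>0$.
   Context: A primitive is a joint probability distribution $P_{X,Y}$ on finite sets $\mathcal X\times\mathcal Y$. Dependent part: for $f_X(x):=P_{Y|X=x}$ (the conditional distribution of $Y$ given $X=x$), define the random variable $X\searrow Y:=f_X(X)$; symmetrically $Y\searrow X:=f_Y(Y)$ with $f_Y(y)=P_{X|Y=y}$. $P_{X,Y}$ is trivial if $H(X\searrow Y\,|\,Y)=0$ (equivalently $H(Y\searrow X\,|\,X)=0$), non-trivial otherwise; $H$ is Shannon entropy (base 2). A regular embedding of $P_{X,Y}$ is a state in $\mathcal H_A\otimes\mathcal H_B$ (with computational bases $\{|x\rangle\}_{x\in\mathcal X}$, $\{|y\rangle\}_{y\in\mathcal Y}$) of the form $\sum_{x,y}e^{i\theta(x,y)}\sqrt{P_{X,Y}(x,y)}|x\rangle_A|y\rangle_B$ for a real function $\theta$; the canonical one has $\theta\equiv 0$. A regular embedding is trivial if $S(X\searrow Y|B)=0$ or $S(Y\searrow X|A)=0$, and non-trivial otherwise. Here $S(X\searrow Y|B)$ is the von Neumann conditional entropy $S(PQ)-S(Q)$ of the classical-quantum state obtained by measuring register $A$ in the computational basis, obtaining $X$, and computing $X\searrow Y$, with $B$ kept quantum;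 $S(Y\searrow X|A)$ is defined symmetrically. *)

From HB Require Import structures.
From mathcomp Require Import all_boot all_order all_algebra.
From mathcomp Require Import reals exp trigo.
From mathcomp Require Import complex.

Set Implicit Arguments.
Unset Strict Implicit.
Unset Printing Implicit Defensive.

Import Order.TTheory GRing.Theory Num.Theory.
Local Open Scope ring_scope.

Section QDefs.
Variable R : realType.
Local Notation C := R[i].

Definition log2 (t : R) : R := ln t / ln 2.
Definition xlog2x (t : R) : R := if 0 < t then t * log2 t else 0.

Section Classical.
Variables X Y : finType.

Definition is_primitive (P : X -> Y -> R) : Prop :=
  (forall x y, 0 <= P x y) /\ \sum_(x : X) \sum_(y : Y) P x y = 1.

Definition marginalX (P : X -> Y -> R) (x : X) : R := \sum_(y : Y) P x y.
Definition marginalY (P : X -> Y -> R) (y : Y) : R := \sum_(x : X) P x y.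

(* f_X(x) = P_{Y|X=x} (only relevant when P_X(x) > 0) *)
Definition condYgX (P : X -> Y -> R) (x : X) : {ffun Y -> R} :=
  [ffun y => P x y / marginalX P x].

(* X \searrow Y := f_X(X) is the random variable (depX P) applied to X *)
Definition depX (P : X -> Y -> R) : X -> {ffun Y -> R} := condYgX P.

Definition values (T : eqType) (g : X -> T) : seq T := undup [seq g x | x <- enum X].

Definition HY (P : X -> Y -> R) : R := - \sum_(y : Y) xlog2x (marginalY P y).

Definition H_joint (P : X -> Y -> R) (T : eqType) (g : X -> T) : R :=
  - \sum_(v <- values g) \sum_(y : Y) xlog2x (\sum_(x : X | g x == v) P x y).

Definition H_cond (P : X -> Y -> R) (T : eqType) (g : X -> T) : R :=
  H_joint P g - HY P.

Definition trivial_primitive (P : X -> Y -> R) : Prop := H_cond P (depX P) = 0.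
Definition nontrivial_primitive (P : X -> Y -> R) : Prop := ~ trivial_primitive P.
End Classical.

Definition swapP (X Y : finType) (P : X -> Y -> R) : Y -> X -> R := fun y x => P x y.

(* an operator on C^T (computational basis indexed by T) given by its entries *)
Definition op_of (T : finType) (f : T -> T -> C) : 'M[C]_#|T| :=
  \matrix_(i, j) f (enum_val i) (enum_val j).

(* eigenvalues (with multiplicity) = the roots of the characteristic polynomial *)
Definition spectrum (n : nat) (M : 'M[C]_n) : seq C :=
  sval (closed_field_poly_normal (char_poly M)).

Definition vN_entropy (n : nat) (M : 'M[C]_n) : R :=
  - \sum_(z <- spectrum M) xlog2x (complex.Re z).

Section Quantum.
Variables X Y : finType.

(* a pure state on H_A (x) H_B given by amplitudes psi x y *)
Definition rhoB (psi : X -> Y -> C) : 'M[C]_#|Y| :=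
  op_of (fun y y' => \sum_(x : X) psi x y * conjc (psi x y')).

(* classical-quantum state on (register of Z = g(X)) (x) B obtained by measuring
   A in the computational basis, computing Z = g(X) and discarding X:
   rho_ZB = sum_v |v><v| (x) sum_{x | g x = v} psi(x,.) psi(x,.)^*  *)
Definition rhoZB (psi : X -> Y -> C) (T : eqType) (g : X -> T)
  : 'M[C]_#|{: 'I_(size (values g)) * Y}| :=
  op_of (fun (ky ky' : 'I_(size (values g)) * Y) =>
    if ky.1 == ky'.1 then
      \sum_(x : X | g x == tnth (in_tuple (values g)) ky.1) psi x ky.2 * conjc (psi x ky'.2)
    else 0).

Definition S_cond (psi : X -> Y -> C) (T : eqType) (g : X -> T) : R :=
  vN_entropy (rhoZB psi g) - vN_entropy (rhoB psi).

Definition regular_embedding (P : X -> Y -> R) (theta : X -> Y -> R) : X -> Y -> C :=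
  fun x y => (cos (theta x y) +i* sin (theta x y))%C * (Num.sqrt (P x y))%:C%C.

Definition canonical_embedding (P : X -> Y -> R) : X -> Y -> C :=
  regular_embedding P (fun _ _ => 0).
End Quantum.

Definition swap_state (X Y : finType) (psi : X -> Y -> C) : Y -> X -> C :=
  fun y x => psi x y.

Definition S_XdepY_B (X Y : finType) (P : X -> Y -> R) (psi : X -> Y -> C) : R :=
  S_cond psi (depX P).
Definition S_YdepX_A (X Y : finType) (P : X -> Y -> R) (psi : X -> Y -> C) : R :=
  S_cond (swap_state psi) (depX (swapP P)).

Definition nontrivial_embedding (X Y : finType) (P : X -> Y -> R) (psi : X -> Y -> C) : Prop :=
  S_XdepY_B P psi <> 0 /\ S_YdepX_A P psi <> 0.
End QDefs.

(* Write [psi_x] for the row [psi x _] of the state, [A_v] for the Gram matrix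
   of the rows with [g x = v].  Measuring [A] leaves the block diagonal state
   [rho_ZB = diag (A_v)], while [rho_B = sum_v A_v].  Diagonalising each block
   writes [rho_B] as the Gram matrix of vectors [phi_k] whose squared norms
   [d_k] are the eigenvalues of [rho_ZB].  In an eigenbasis of [rho_B], with
   eigenvalues [mu_j], the matrix [c_kj = |<j|phi_k>|^2] has row sums [d_k],
   column sums [mu_j] and (Bessel) [sum_j c_kj / mu_j <= 1], so [ln t <= t - 1]
   gives [sum d ln d <= sum mu ln mu], i.e. [S(g X | B) >= 0].  Equality would
   make the [phi_k] of different blocks orthogonal, hence also the rows [psi_x]
   of different blocks.  For the canonical embedding, two rows whose supports
   meet have positive overlap, and a non-trivial primitive has two such rows
   with [f_X x1 <> f_X x2], since otherwise [H(X \searrow Y | Y) = 0].  The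
   second inequality is the first one for the transposed primitive. *)

From HB Require Import structures.
From mathcomp Require Import all_boot all_order all_algebra.
From mathcomp Require Import reals exp trigo.
From mathcomp Require Import complex boolp.
From mathcomp Require Import sesquilinear spectral.
From mathcomp Require Import ring lra.

Set Implicit Arguments.
Unset Strict Implicit.
Unset Printing Implicit Defensive.

Import Order.TTheory GRing.Theory Num.Theory.
Local Open Scope complex_scope.
Local Open Scope sesquilinear_scope.
Local Open Scope ring_scope.

Section SumOrder.
Variable R : numDomainType.

Lemma ler_sum_term (I : finType) (F : I -> R) (i0 : I) :
  (forall i, 0 <= F i) -> F i0 <= \sum_i F i.
Proof. by move=> F0; rewrite (bigD1 i0) //= lerDl sumr_ge0. Qed.

Lemma ler_sum_lt (I : finType) (F G : I -> R) (i0 : I) :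
  (forall i, F i <= G i) -> F i0 < G i0 -> \sum_i F i < \sum_i G i.
Proof.
move=> FG Fi0; rewrite (bigD1 i0) //= [X in _ < X](bigD1 i0) //=.
by rewrite ltr_leD // ler_sum.
Qed.

End SumOrder.

Lemma big_pair (V : nmodType) (I J : finType) (F : I * J -> V) :
  \sum_k F k = \sum_i \sum_j F (i, j).
Proof. by rewrite pair_bigA; apply: eq_bigr => -[]. Qed.

Lemma big_enum_rank_ord (V : nmodType) (S : finType) (F : 'I_#|S| -> V) :
  \sum_s F (enum_rank s) = \sum_i F i.
Proof.
rewrite (big_enum_val (A := S) (F \o enum_rank)).
by apply: eq_bigr => i _ /=; rewrite enum_valK.
Qed.

Lemma sum_delta (V : comPzRingType) (I : finType) (f D : I -> V) (u : I) :
  \sum_u' f u' * ((u' == u)%:R * D u') = f u * D u.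
Proof.
rewrite (bigD1 u) //= eqxx mul1r big1 ?addr0 // => u' nu.
by rewrite (negbTE nu) mul0r mulr0.
Qed.

Lemma big_pair_fst (V : nmodType) (I J : finType) (i0 : I) (F : I * J -> V) :
  \sum_(k | k.1 == i0) F k = \sum_j F (i0, j).
Proof.
have -> : \sum_j F (i0, j) = \sum_i \sum_(j | i == i0) F (i, j).
  rewrite (bigD1 i0) //= eqxx [X in _ + X]big1 ?addr0 // => i /negbTE ->.
  by rewrite big_pred0_eq.
by rewrite pair_big_dep; apply: eq_big => [[i j]|[i j]].
Qed.

Section EntropyComparison.
Variable R : realType.

Lemma ln_le_subr1 (x : R) : 0 < x -> ln x <= x - 1.
Proof.
move=> x0; rewrite -ler_expR lnK ?posrE //.
by have := expR_ge1Dx (x - 1); rewrite addrCA subrr addr0.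
Qed.

Lemma ln_lt_subr1 (x : R) : 0 < x -> x != 1 -> ln x < x - 1.
Proof.
move=> x0 x1; rewrite -ltr_expR lnK ?posrE //.
by have := @expR_gt1Dx _ (x - 1); rewrite addrCA subrr addr0 subr_eq0; apply.
Qed.

(* [ln q <= q - 1] for [q = r / s], multiplied by [c]. *)
Lemma gibbs_entry (c r s : R) : 0 < c -> c <= r -> c <= s ->
  c - r * (c / s) <= c * ln s - c * ln r
  /\ (r != s -> c - r * (c / s) < c * ln s - c * ln r).
Proof.
move=> c0 cr cs; have r0 := lt_le_trans c0 cr; have s0 := lt_le_trans c0 cs.
have q0 : 0 < r / s by rewrite divr_gt0.
have lnq : ln (r / s) = ln r - ln s by rewrite ln_div ?posrE.
have -> : c - r * (c / s) = c * (1 - r / s) by rewrite mulrBr mulr1 mulrCA mulrA.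
rewrite -mulrBr; split => [|rs].
  by rewrite ler_pM2l //; have := ln_le_subr1 q0; rewrite lnq; lra.
have q1 : r / s != 1 by rewrite -(inj_eq (mulIf (lt0r_neq0 s0))) divfK ?lt0r_neq0 // mul1r.
by rewrite ltr_pM2l //; have := ln_lt_subr1 q0 q1; rewrite lnq; lra.
Qed.

(* Summing [gibbs_entry] over all entries: the left-hand sides add up to a
   nonnegative quantity by the Bessel-type hypothesis. *)
Lemma sum_xlnx_rows_lt_cols (K J : finType) (c : K -> J -> R) :
  let r k := \sum_j c k j in let s j := \sum_k c k j in
  (forall k j, 0 <= c k j) ->
  (forall k, \sum_j c k j / s j <= 1) ->
  (exists k j, 0 < c k j /\ r k != s j) ->
  \sum_k r k * ln (r k) < \sum_j s j * ln (s j).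
Proof.
move=> r s c0 bessel [k0 [j0 [ck0 neq0]]].
have cr k j : c k j <= r k by apply: ler_sum_term => ?; apply: c0.
have cs k j : c k j <= s j by apply: (ler_sum_term (F := c^~ j)) => ?; apply: c0.
pose e k j := c k j - r k * (c k j / s j).
pose gain k j := c k j * ln (s j) - c k j * ln (r k).
have e_le k j : e k j <= gain k j.
  have [ckj|cle] := ltP 0 (c k j); first exact: (gibbs_entry ckj (cr k j) (cs k j)).1.
  have c_0 : c k j = 0 by apply/eqP; rewrite eq_le cle c0.
  by rewrite /e /gain c_0 !mul0r mulr0 subrr.
have e_lt : e k0 j0 < gain k0 j0 by exact: (gibbs_entry ck0 (cr k0 j0) (cs k0 j0)).2 neq0.
have e_ge0 : 0 <= \sum_k \sum_j e k j.
  apply: sumr_ge0 => k _; rewrite sumrB -mulr_sumr -/(r k).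
  have := bessel k; have : 0 <= r k by exact: sumr_ge0.
  nra.
have gainE : \sum_k \sum_j gain k j =
    \sum_j s j * ln (s j) - \sum_k r k * ln (r k).
  under eq_bigr => k _ do rewrite sumrB.
  rewrite sumrB exchange_big /=.
  by congr (_ - _); apply: eq_bigr => ? _; rewrite mulr_suml.
rewrite -subr_gt0 -gainE (le_lt_trans e_ge0) //.
apply: (ler_sum_lt (i0 := k0)) => [k|]; first by apply: ler_sum => j _.
exact: ler_sum_lt e_lt.
Qed.

End EntropyComparison.

Section Xlog2x.
Variable R : realType.

Lemma xlog2x0 : xlog2x (0 : R) = 0.
Proof. by rewrite /xlog2x ltxx. Qed.

Lemma xlog2xE (t : R) : 0 <= t -> xlog2x t = t * ln t / ln 2.
Proof.
rewrite /xlog2x /log2 le0r => /orP [/eqP ->|t0]; first by rewrite ltxx !mul0r.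
by rewrite t0 mulrA.
Qed.

Lemma ltr_sum_xlog2x (I J : finType) (r : I -> R) (s : J -> R) :
  (forall i, 0 <= r i) -> (forall j, 0 <= s j) ->
  \sum_i r i * ln (r i) < \sum_j s j * ln (s j) ->
  \sum_i xlog2x (r i) < \sum_j xlog2x (s j).
Proof.
move=> r0 s0 lt_rs.
rewrite -subr_gt0 (eq_bigr _ (fun i _ => xlog2xE (r0 i))).
rewrite (eq_bigr _ (fun j _ => xlog2xE (s0 j))) -!mulr_suml -mulrBl.
by rewrite divr_gt0 ?subr_gt0 // ln_gt0 // ltr1n.
Qed.

End Xlog2x.

Section ComplexBasics.
Variable R : realType.
Local Notation C := R[i].

Lemma RRe_ge0 (z : C) : 0 <= z -> (complex.Re z)%:C = z.
Proof. by move=> z0; rewrite RRe_real // ger0_real. Qed.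

Lemma Re_ge0 (z : C) : 0 <= z -> 0 <= complex.Re z.
Proof. by move=> z0; rewrite -ler0c RRe_ge0. Qed.

Lemma Re_sum (I : finType) (P : pred I) (F : I -> C) :
  complex.Re (\sum_(i | P i) F i) = \sum_(i | P i) complex.Re (F i).
Proof. by apply: (big_morph (@complex.Re R)) => // [[a b] [c d]]. Qed.

Lemma conjC_realc (r : R) : (r%:C)^* = r%:C :> C.
Proof. by rewrite conj_Creal // complex_real. Qed.

Lemma sqrtC_mul_conj (z : C) : 0 <= z -> sqrtC z * (sqrtC z)^* = z.
Proof. by move=> z0; rewrite conj_Creal ?ger0_real ?sqrtC_ge0 // -expr2 sqrtCK. Qed.

End ComplexBasics.

Section OrthogonalColumns.
Variables (R : realType) (K J : finType).
Local Notation C := R[i].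
Variable b : K -> J -> C.
Hypothesis b_orth : forall j j', j != j' -> \sum_k b k j' * (b k j)^* = 0.

Let c k j := complex.Re (b k j * (b k j)^*).
Let r k := \sum_j c k j.
Let s j := \sum_k c k j.

Lemma orth_entryE k j : b k j * (b k j)^* = (c k j)%:C.
Proof. by rewrite RRe_ge0 // mul_conjC_ge0. Qed.

Lemma orth_entry_ge0 k j : 0 <= c k j.
Proof. by rewrite -ler0c -orth_entryE mul_conjC_ge0. Qed.

Lemma orth_colE j : \sum_k b k j * (b k j)^* = (s j)%:C.
Proof. by rewrite /s rmorph_sum; apply: eq_bigr => k _; rewrite orth_entryE. Qed.

Let coord (a : J -> C) k := \sum_j a j * (b k j)^*.

(* Pythagoras in the orthogonal columns of [b]. *)
Lemma sum_coord_sqr (a : J -> C) :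
  \sum_k coord a k * (coord a k)^* = \sum_j a j * (a j)^* * (s j)%:C.
Proof.
rewrite /coord.
under eq_bigr => k _ do rewrite rmorph_sum mulr_suml.
under eq_bigr => k _ do under eq_bigr => j _ do rewrite mulr_sumr.
rewrite exchange_big; apply: eq_bigr => j _ /=.
rewrite exchange_big /= (bigD1 j) //= [X in _ + X]big1 ?addr0.
  rewrite -orth_colE mulr_sumr; apply: eq_bigr => k _.
  by rewrite rmorphM /= conjCK; ring.
move=> j' nj'; have /b_orth orth : j != j' by rewrite eq_sym.
rewrite -[RHS](mulr0 (a j * (a j')^*)) -[in RHS]orth mulr_sumr.
by apply: eq_bigr => k _; rewrite rmorphM /= conjCK; ring.
Qed.

Lemma sum_entry_div_col_le1 k : \sum_j c k j / s j <= 1.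
Proof.
set q := \sum_j _.
have s_ge0 j : 0 <= s j by apply: sumr_ge0 => *; apply: orth_entry_ge0.
have q0 : 0 <= q by apply: sumr_ge0 => j _; rewrite divr_ge0 ?orth_entry_ge0.
pose a j := b k j / (s j)%:C.
have coord_k : coord a k = q%:C.
  rewrite /coord /q rmorph_sum; apply: eq_bigr => j _.
  by rewrite /a mulrAC orth_entryE fmorph_div.
have sum_sqr : \sum_l coord a l * (coord a l)^* = q%:C.
  rewrite sum_coord_sqr /q rmorph_sum; apply: eq_bigr => j _.
  have [s0|s0] := eqVneq (s j) 0; first by rewrite s0 invr0 !mulr0 rmorph0.
  have sC : (s j)%:C != 0 :> C by rewrite fmorph_eq0.
  rewrite /a fmorph_div /= conjC_realc fmorph_div /= -orth_entryE.
  by field.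
have : coord a k * (coord a k)^* <= \sum_l coord a l * (coord a l)^*.
  by rewrite (bigD1 k) //= lerDl sumr_ge0 // => l _; exact: mul_conjC_ge0.
by rewrite sum_sqr coord_k conjC_realc -rmorphM lecR; nra.
Qed.

(* If every positive entry had equal row and column sums, [b k] would have
   coordinate [r k] on itself and total squared coordinates [r k ^ 2], leaving
   nothing for the other rows. *)
Lemma orth_rows_entry_neq :
  (exists k l, k != l /\ \sum_j b k j * (b l j)^* != 0) ->
  exists k j, 0 < c k j /\ r k != s j.
Proof.
move=> [k [l [kl kl_neq0]]].
have [/existsP [k' /existsP [j /andP [c_gt0 rs]]]|] :=
  boolP [exists k, exists j, (0 < c k j) && (r k != s j)]; first by exists k', j.
move=> /existsPn /(_ k) /existsPn rs; exfalso.
have coord_k : coord (b k) k = (r k)%:C.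
  by rewrite /coord /r rmorph_sum; apply: eq_bigr => j _; rewrite orth_entryE.
have sum_sqr : \sum_l coord (b k) l * (coord (b k) l)^* = (r k)%:C * (r k)%:C.
  rewrite sum_coord_sqr -rmorphM {1}/r mulr_suml rmorph_sum; apply: eq_bigr => j _.
  rewrite orth_entryE -rmorphM; congr _%:C.
  have [c_gt0|c_le0] := ltP 0 (c k j).
    by move: (rs j); rewrite c_gt0 negbK => /eqP ->.
  have -> : c k j = 0 by apply/eqP; rewrite eq_le c_le0 orth_entry_ge0.
  by rewrite !mul0r.
move: sum_sqr; rewrite (bigD1 k) //= coord_k conjC_realc -[RHS]addr0 => /addrI.
move=> /psumr_eq0P /(_ l); rewrite eq_sym kl => /(_ (fun _ _ => mul_conjC_ge0 _)).
by move=> /(_ isT) /eqP; rewrite mul_conjC_eq0; apply/negP.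
Qed.

Lemma sum_xlnx_rows_lt_cols_orth :
  (exists k l, k != l /\ \sum_j b k j * (b l j)^* != 0) ->
  \sum_k r k * ln (r k) < \sum_j s j * ln (s j).
Proof.
move=> /orth_rows_entry_neq neq.
exact: sum_xlnx_rows_lt_cols orth_entry_ge0 sum_entry_div_col_le1 neq.
Qed.

End OrthogonalColumns.

Lemma char_poly_conj (F : fieldType) n (V U D : 'M[F]_n) :
  V *m U = 1%:M -> char_poly (V *m D *m U) = char_poly D.
Proof.
move=> VU; rewrite /char_poly /char_poly_mx !map_mxM.
have XE : ('X%:M : 'M[{poly F}]_n) = map_mx polyC V *m 'X%:M *m map_mx polyC U.
  by rewrite mul_mx_scalar -scalemxAl -map_mxM VU map_mx1 scalemx1.
rewrite {1}XE -mulmxBl -mulmxBr !det_mulmx mulrAC -det_mulmx -map_mxM VU map_mx1.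
by rewrite det1 mul1r.
Qed.

Section Spectrum.
Variable R : realType.
Local Notation C := R[i].

Lemma perm_eq_spectrum_diag n (V U : 'M[C]_n) (d : 'rV[C]_n) :
  V *m U = 1%:M ->
  perm_eq (spectrum (V *m diag_mx d *m U)) [seq d 0 i | i <- enum 'I_n].
Proof.
move=> VU; rewrite /spectrum; case: closed_field_poly_normal => s /= sE.
apply: prod_XsubC_eq; rewrite -[LHS]scale1r.
have <- : lead_coef (char_poly (V *m diag_mx d *m U)) = 1.
  exact/monicP/char_poly_monic.
rewrite -sE char_poly_conj // char_poly_trig ?diag_mx_is_trig //.
by rewrite big_map big_enum /=; apply: eq_bigr => i _; rewrite mxE eqxx mulr1n.
Qed.

Lemma vN_entropy_diag n (V U : 'M[C]_n) (d : 'rV[C]_n) :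
  V *m U = 1%:M ->
  vN_entropy (V *m diag_mx d *m U) = - \sum_i xlog2x (complex.Re (d 0 i)).
Proof.
by move=> VU; rewrite /vN_entropy (perm_big _ (perm_eq_spectrum_diag d VU)) big_map big_enum.
Qed.

Lemma spectral_unitary n (M : 'M[C]_n) : M \is normalmx ->
  let U := spectralmx M in let D := diag_mx (spectral_diag M) in
  [/\ U *m U^t* = 1%:M, U^t* *m U = 1%:M, M = U^t* *m D *m U & U *m M *m U^t* = D].
Proof.
move=> /orthomx_spectralP MD U D.
have U_unitary : U \is unitarymx by apply: spectral_unitarymx.
have UU : U *m U^t* = 1%:M by apply/unitarymxP.
have MD' : M = U^t* *m D *m U by rewrite -invmx_unitary.
split => //; first by rewrite -invmx_unitary // mulVmx // unitarymx_unit.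
by rewrite {1}MD' !mulmxA UU mul1mx -mulmxA UU mulmx1.
Qed.

Lemma mulmx_adj_diag_entry n (U : 'M[C]_n) (d : 'rV[C]_n) a b :
  (U^t* *m diag_mx d *m U) a b = \sum_i (U i a)^* * d 0 i * U i b.
Proof. by rewrite mul_mx_diag mxE; apply: eq_bigr => i _; rewrite !mxE. Qed.

End Spectrum.

Section Gram.
Variables (R : realType) (n : nat).
Local Notation C := R[i].

Definition inner (f h : 'I_n -> C) := \sum_a f a * (h a)^*.

Definition gram (I : finType) (p : pred I) (f : I -> 'I_n -> C) : 'M[C]_n :=
  \matrix_(a, b) \sum_(i | p i) f i a * (f i b)^*.

Lemma inner_conj (f h : 'I_n -> C) : (inner f h)^* = inner h f.
Proof.
by rewrite /inner rmorph_sum; apply: eq_bigr => a _; rewrite rmorphM /= conjCK mulrC.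
Qed.

Lemma gram_normal (I : finType) (p : pred I) (f : I -> 'I_n -> C) :
  gram p f \is normalmx.
Proof.
have selfadj : (gram p f)^t* = gram p f.
  apply/matrixP => a b; rewrite !mxE rmorph_sum; apply: eq_bigr => i _.
  by rewrite rmorphM /= conjCK mulrC.
by apply/normalmxP; rewrite selfadj.
Qed.

Lemma gram_quadratic_form (I : finType) (p : pred I) (f : I -> 'I_n -> C) u :
  \sum_a \sum_b (u a)^* * gram p f a b * u b =
  \sum_(i | p i) inner (f i) u * (inner (f i) u)^*.
Proof.
rewrite /inner.
under [RHS]eq_bigr => i _ do rewrite rmorph_sum mulr_suml.
under [RHS]eq_bigr => i _ do under eq_bigr => a _ do rewrite mulr_sumr.
rewrite [RHS]exchange_big /=; apply: eq_bigr => a _.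
rewrite [RHS]exchange_big /=; apply: eq_bigr => b _.
rewrite mxE mulr_sumr mulr_suml; apply: eq_bigr => i _.
by rewrite rmorphM /= conjCK; ring.
Qed.

(* By [gram_quadratic_form], both families have the same sum of squared inner
   products with [u]. *)
Lemma gram_eq_inner_neq0 (I J : finType) (p : pred I) (q : pred J)
    (f : I -> 'I_n -> C) (h : J -> 'I_n -> C) u i :
  gram p f = gram q h -> p i -> inner (f i) u != 0 ->
  exists2 j, q j & inner (h j) u != 0.
Proof.
move=> fh pi fi; apply/exists_inP; apply: contraLR fi => /exists_inPn h0.
have sum0 : \sum_(j | q j) inner (h j) u * (inner (h j) u)^* = 0.
  by apply: big1 => j qj; rewrite (eqP (negPn (h0 j qj))) mul0r.
move: sum0; rewrite -gram_quadratic_form -fh gram_quadratic_form.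
move=> /psumr_eq0P /(_ i pi); rewrite negbK => /(_ (fun _ _ => mul_conjC_ge0 _)).
by move=> /eqP; rewrite mul_conjC_eq0.
Qed.

Lemma unitary_conj_gram_entry (I : finType) (p : pred I) (f : I -> 'I_n -> C)
    (U : 'M[C]_n) j' j :
  (U *m gram p f *m U^t*) j' j =
  \sum_(i | p i) (\sum_a U j' a * f i a) * (\sum_a U j a * f i a)^*.
Proof.
rewrite mxE.
under eq_bigr => b _ do rewrite !mxE mulr_suml.
under [RHS]eq_bigr => i _ do rewrite rmorph_sum mulr_suml.
under [RHS]eq_bigr => i _ do under eq_bigr => a _ do rewrite mulr_sumr.
rewrite [RHS]exchange_big /=.
under [RHS]eq_bigr => a _ do rewrite exchange_big /=.
rewrite [RHS]exchange_big /=; apply: eq_bigr => b _; apply: eq_bigr => a _.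
rewrite !mxE mulr_sumr mulr_suml; apply: eq_bigr => i _.
by rewrite rmorphM; ring.
Qed.

Lemma parseval (U : 'M[C]_n) (f h : 'I_n -> C) :
  U^t* *m U = 1%:M ->
  \sum_j (\sum_a U j a * f a) * (\sum_a U j a * h a)^* = inner f h.
Proof.
move=> UU; rewrite /inner.
under eq_bigr => j _ do rewrite rmorph_sum mulr_suml.
under eq_bigr => j _ do under eq_bigr => a _ do rewrite mulr_sumr.
rewrite exchange_big /=; apply: eq_bigr => a _.
rewrite exchange_big /= (bigD1 a) //= [X in _ + X]big1 ?addr0.
  have := congr1 (fun M : 'M[C]_n => M a a) UU; rewrite !mxE eqxx mulr1n => UUa.
  rewrite -[RHS]mul1r -UUa mulr_suml; apply: eq_bigr => j _.
  by rewrite !mxE rmorphM; ring.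
move=> b ba.
have := congr1 (fun M : 'M[C]_n => M b a) UU; rewrite !mxE (negbTE ba) mulr0n => UUba.
rewrite -[RHS](mulr0 (f a * (h b)^*)) -[in RHS]UUba mulr_sumr; apply: eq_bigr => j _.
by rewrite !mxE rmorphM; ring.
Qed.

End Gram.

Section Operators.
Variables (R : realType) (S : finType).
Local Notation C := R[i].

Lemma op_ofM (f h : S -> S -> C) :
  op_of f *m op_of h = op_of (fun s t => \sum_u f s u * h u t).
Proof.
apply/matrixP => p q; rewrite !mxE.
rewrite (big_enum_val (A := S) (fun u => f (enum_val p) u * h u (enum_val q))).
by apply: eq_bigr => r _; rewrite !mxE.
Qed.

Lemma op_of_adj (f : S -> S -> C) : (op_of f)^t* = op_of (fun s t => (f t s)^*).
Proof. by apply/matrixP => p q; rewrite !mxE. Qed.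

Lemma diag_mx_op_of (D : S -> C) :
  diag_mx (\row_q D (enum_val q)) = op_of (fun s t => (s == t)%:R * D s).
Proof.
apply/matrixP => p q; rewrite !mxE (inj_eq enum_val_inj).
by case: eqP => _; rewrite ?mulr1n ?mul1r ?mulr0n ?mul0r.
Qed.

Lemma op_of1 : 1%:M = op_of (fun s t : S => (s == t)%:R) :> 'M[C]_#|S|.
Proof. by apply/matrixP => p q; rewrite !mxE (inj_eq enum_val_inj). Qed.

Lemma eq_op_of (f h : S -> S -> C) : f =2 h -> op_of f = op_of h.
Proof. by move=> fh; apply/matrixP => p q; rewrite !mxE fh. Qed.

End Operators.

Section ConditionalEntropy.
Variables (R : realType) (X Y : finType) (T : eqType).
Local Notation C := R[i].
Variables (psi : X -> Y -> C) (g : X -> T).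

Local Notation n := #|Y|.
Local Notation m := (size (values g)).

Definition row_vec x (a : 'I_n) : C := psi x (enum_val a).

Definition in_block (v : 'I_m) x := g x == tnth (in_tuple (values g)) v.

Lemma mem_values x : g x \in values g.
Proof. by rewrite mem_undup; apply: map_f; rewrite mem_enum. Qed.

Definition block x : 'I_m := Ordinal (etrans (index_mem _ _) (mem_values x)).

Lemma in_blockE v x : in_block v x = (block x == v).
Proof.
rewrite /in_block (tnth_nth (g x)) /=; apply/eqP/eqP => [gx|<-].
  by apply: val_inj; rewrite /= gx index_uniq ?undup_uniq.
by rewrite nth_index ?mem_values.
Qed.

Definition block_op v : 'M[C]_n := gram (in_block v) row_vec.
Definition block_U v := spectralmx (block_op v).
Definition block_eig v := spectral_diag (block_op v).

Lemma block_spectral v :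
  [/\ block_U v *m (block_U v)^t* = 1%:M, (block_U v)^t* *m block_U v = 1%:M,
      block_op v = (block_U v)^t* *m diag_mx (block_eig v) *m block_U v &
      block_U v *m block_op v *m (block_U v)^t* = diag_mx (block_eig v)].
Proof. exact: (spectral_unitary (gram_normal _ _)). Qed.

Lemma block_eig_ge0 v i : 0 <= block_eig v 0 i.
Proof.
have [_ _ _ /(congr1 (fun M : 'M[C]_n => M i i))] := block_spectral v.
rewrite unitary_conj_gram_entry mxE eqxx mulr1n => <-.
by apply: sumr_ge0 => x _; exact: mul_conjC_ge0.
Qed.

(* The eigenvectors of the block [v], scaled by the square roots of their
   eigenvalues: [block_op v] is their Gram matrix. *)
Definition eigvec (k : 'I_m * 'I_n) (a : 'I_n) : C :=
  sqrtC (block_eig k.1 0 k.2) * (block_U k.1 k.2 a)^*.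

Lemma block_op_eigvec v : block_op v = gram (fun k : 'I_m * 'I_n => k.1 == v) eigvec.
Proof.
have [_ _ opE _] := block_spectral v.
apply/matrixP => a b; rewrite {1}opE mulmx_adj_diag_entry [in RHS]mxE big_pair_fst.
apply: eq_bigr => i _; rewrite /eigvec /= rmorphM /= conjCK.
by rewrite -[in LHS](sqrtC_mul_conj (block_eig_ge0 v i)); ring.
Qed.

Lemma inner_eigvec k : inner (eigvec k) (eigvec k) = block_eig k.1 0 k.2.
Proof.
have [/(congr1 (fun M : 'M[C]_n => M k.2 k.2))] := block_spectral k.1.
rewrite !mxE eqxx mulr1n => UU _ _ _.
rewrite /inner -[RHS]mulr1 -UU mulr_sumr; apply: eq_bigr => a _.
rewrite /eigvec !mxE rmorphM /= conjCK -[in RHS](sqrtC_mul_conj (block_eig_ge0 _ _)).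
by ring.
Qed.

Lemma rhoB_gram : rhoB psi = gram predT row_vec.
Proof. by apply/matrixP => a b; rewrite !mxE. Qed.

Lemma gram_row_vec_eigvec : gram predT row_vec = gram predT eigvec.
Proof.
apply/matrixP => a b; rewrite !mxE (partition_big block predT) //=.
rewrite (partition_big (fun k : 'I_m * 'I_n => k.1) predT) //=.
apply: eq_bigr => v _.
have := congr1 (fun M : 'M[C]_n => M a b) (block_op_eigvec v); rewrite !mxE => <-.
by apply: eq_bigl => x; rewrite in_blockE.
Qed.

Definition rhoB_U := spectralmx (gram predT row_vec).
Definition rhoB_eig := spectral_diag (gram predT row_vec).

Definition rhoB_coord (k : 'I_m * 'I_n) (j : 'I_n) := \sum_a rhoB_U j a * eigvec k a.

Lemma rhoB_spectral :
  [/\ rhoB_U *m rhoB_U^t* = 1%:M, rhoB_U^t* *m rhoB_U = 1%:M,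
      gram predT row_vec = rhoB_U^t* *m diag_mx rhoB_eig *m rhoB_U &
      rhoB_U *m gram predT row_vec *m rhoB_U^t* = diag_mx rhoB_eig].
Proof. exact: (spectral_unitary (gram_normal _ _)). Qed.

Lemma rhoB_coord_cols j' j :
  \sum_k rhoB_coord k j' * (rhoB_coord k j)^* = rhoB_eig 0 j' *+ (j' == j).
Proof.
have [_ _ _ /(congr1 (fun M : 'M[C]_n => M j' j))] := rhoB_spectral.
by rewrite gram_row_vec_eigvec unitary_conj_gram_entry mxE => <-.
Qed.

Lemma rhoB_coord_rows k l :
  \sum_j rhoB_coord k j * (rhoB_coord l j)^* = inner (eigvec k) (eigvec l).
Proof. by have [_ UU _ _] := rhoB_spectral; exact: parseval. Qed.

Lemma vN_entropy_rhoB :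
  vN_entropy (rhoB psi) = - \sum_j xlog2x (complex.Re (rhoB_eig 0 j)).
Proof. by have [_ UU opE _] := rhoB_spectral; rewrite rhoB_gram opE vN_entropy_diag. Qed.

(* [rhoZB psi g] is block diagonal with blocks [block_op v]; conjugating each
   block by its own eigenbasis diagonalises it. *)
Definition blockdiag_U (s t : 'I_m * Y) : C :=
  (s.1 == t.1)%:R * block_U s.1 (enum_rank s.2) (enum_rank t.2).

Lemma blockdiag_conj_entry (e : 'I_m -> 'I_n -> C) (s t : 'I_m * Y) :
  \sum_u (blockdiag_U u s)^* * e u.1 (enum_rank u.2) * blockdiag_U u t =
  (s.1 == t.1)%:R *
    \sum_i (block_U s.1 i (enum_rank s.2))^* * e s.1 i * block_U s.1 i (enum_rank t.2).
Proof.
rewrite big_pair (bigD1 s.1) //= [X in _ + X]big1 ?addr0 => [|v vs]; last first.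
  by apply: big1 => y _; rewrite /blockdiag_U /= (negbTE vs) /= !mul0r rmorph0 !mul0r.
rewrite mulr_sumr -big_enum_rank_ord; apply: eq_bigr => y _.
by rewrite /blockdiag_U /= eqxx !mul1r; ring.
Qed.

Lemma blockdiag_U_unitary : (op_of blockdiag_U)^t* *m op_of blockdiag_U = 1%:M.
Proof.
rewrite op_of_adj op_ofM op_of1; apply: eq_op_of => -[v1 y1] [v2 y2] /=.
transitivity (\sum_u (blockdiag_U u (v1, y1))^* * 1 * blockdiag_U u (v2, y2)).
  by apply: eq_bigr => u _; rewrite mulr1.
rewrite (blockdiag_conj_entry (fun _ _ => 1)) /=; have [_ UU _ _] := block_spectral v1.
have -> : \sum_i (block_U v1 i (enum_rank y1))^* * 1 * block_U v1 i (enum_rank y2) =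
    ((block_U v1)^t* *m block_U v1) (enum_rank y1) (enum_rank y2).
  by rewrite mxE; apply: eq_bigr => i _; rewrite !mxE mulr1.
rewrite UU mxE (inj_eq enum_rank_inj) xpair_eqE.
by case: (v1 == v2); case: (y1 == y2); rewrite ?mulr1 ?mul1r ?mulr0 ?mul0r.
Qed.

Lemma rhoZB_blockdiag : rhoZB psi g =
  (op_of blockdiag_U)^t*
  *m diag_mx (\row_q block_eig (enum_val q).1 0 (enum_rank (enum_val q).2))
  *m op_of blockdiag_U.
Proof.
rewrite (diag_mx_op_of (fun s => block_eig s.1 0 (enum_rank s.2))) op_of_adj !op_ofM.
apply: eq_op_of => -[v1 y1] [v2 y2] /=.
under [RHS]eq_bigr => u _ do rewrite sum_delta.
rewrite (blockdiag_conj_entry (fun v i => block_eig v 0 i)) /=.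
have [_ _ opE _] := block_spectral v1.
rewrite -mulmx_adj_diag_entry -opE /block_op mxE.
case: (v1 == v2); last by rewrite mul0r.
rewrite mul1r; apply: eq_bigr => x _.
by rewrite /row_vec !enum_rankK.
Qed.

Lemma vN_entropy_rhoZB : vN_entropy (rhoZB psi g) =
  - \sum_(k : 'I_m * 'I_n) xlog2x (complex.Re (block_eig k.1 0 k.2)).
Proof.
rewrite rhoZB_blockdiag vN_entropy_diag ?blockdiag_U_unitary //; congr (- _).
under eq_bigr => q _ do rewrite mxE.
rewrite -(big_enum_val (A := {: 'I_m * Y})
  (fun s => xlog2x (complex.Re (block_eig s.1 0 (enum_rank s.2))))).
rewrite !big_pair; apply: eq_bigr => v _.
exact: (big_enum_rank_ord (fun i => xlog2x (complex.Re (block_eig v 0 i)))).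
Qed.

Lemma rhoB_coord_orth j j' :
  j != j' -> \sum_k rhoB_coord k j' * (rhoB_coord k j)^* = 0.
Proof. by move=> jj'; rewrite rhoB_coord_cols eq_sym (negbTE jj') mulr0n. Qed.

Lemma g_block x : g x = tnth (in_tuple (values g)) (block x).
Proof. by apply/eqP; rewrite -/(in_block _ _) in_blockE. Qed.

Lemma rhoB_coord_rows_neq0 x1 x2 :
  g x1 != g x2 -> inner (row_vec x1) (row_vec x2) != 0 ->
  exists k l, k != l /\ \sum_j rhoB_coord k j * (rhoB_coord l j)^* != 0.
Proof.
move=> g12 x12.
have [k /eqP k1 k_x2] : exists2 k : 'I_m * 'I_n,
    k.1 == block x1 & inner (eigvec k) (row_vec x2) != 0.
  by apply: (gram_eq_inner_neq0 (block_op_eigvec (block x1)) _ x12); rewrite in_blockE.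
have [l /eqP l2 l_k] : exists2 l : 'I_m * 'I_n,
    l.1 == block x2 & inner (eigvec l) (eigvec k) != 0.
  apply: (gram_eq_inner_neq0 (block_op_eigvec (block x2))); first by rewrite in_blockE.
  by rewrite -inner_conj conjC_eq0.
exists l, k; rewrite rhoB_coord_rows l_k; split => //.
by apply: contraNneq g12 => lk; rewrite !g_block -k1 -l2 lk.
Qed.

Lemma S_cond_gt0 :
  (exists x1 x2, g x1 != g x2 /\ \sum_y psi x1 y * (psi x2 y)^* != 0) ->
  0 < S_cond psi g.
Proof.
move=> [x1 [x2 [g12 psi12]]].
have x12 : inner (row_vec x1) (row_vec x2) != 0.
  by rewrite /inner -(big_enum_val (A := Y) (fun y => psi x1 y * (psi x2 y)^*)).
have rowE k : \sum_j complex.Re (rhoB_coord k j * (rhoB_coord k j)^*) =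
    complex.Re (block_eig k.1 0 k.2).
  by rewrite -Re_sum rhoB_coord_rows inner_eigvec.
have colE j : \sum_k complex.Re (rhoB_coord k j * (rhoB_coord k j)^*) =
    complex.Re (rhoB_eig 0 j).
  by rewrite -Re_sum rhoB_coord_cols eqxx mulr1n.
have := sum_xlnx_rows_lt_cols_orth rhoB_coord_orth (rhoB_coord_rows_neq0 g12 x12).
under eq_bigr => k _ do rewrite rowE.
under [X in _ < X]eq_bigr => j _ do rewrite colE.
rewrite /S_cond vN_entropy_rhoZB vN_entropy_rhoB opprK addrC subr_gt0.
apply: ltr_sum_xlog2x => [k|j]; apply: Re_ge0; first exact: block_eig_ge0.
have := rhoB_coord_cols j j; rewrite eqxx mulr1n => <-.
by apply: sumr_ge0 => k _; apply: mul_conjC_ge0.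
Qed.

End ConditionalEntropy.

Section Primitive.
Variables (R : realType) (X Y : finType) (P : X -> Y -> R).
Hypothesis P_ge0 : forall x y, 0 <= P x y.

Let P_eq0 x y : ~~ (0 < P x y) -> P x y = 0.
Proof. by move=> Pxy; apply/eqP; rewrite eq_le P_ge0 andbT leNgt. Qed.

(* Column by column, the joint entropy of [(g X, Y)] collapses to that of [Y]. *)
Lemma H_cond_eq0 (T : eqType) (g : X -> T) :
  (forall y x1 x2, 0 < P x1 y -> 0 < P x2 y -> g x1 = g x2) -> H_cond P g = 0.
Proof.
move=> gY; rewrite /H_cond /H_joint /HY exchange_big /=.
rewrite (eq_bigr (fun y => xlog2x (marginalY P y))) ?opprK ?addNr // => y _.
have [/existsP [x0 Px0]|/existsPn Py0] := boolP [exists x, 0 < P x y]; last first.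
  have P0 x : P x y = 0 by exact/P_eq0/Py0.
  have -> : marginalY P y = 0 by apply: big1 => x _; exact: P0.
  by rewrite xlog2x0 big1_seq // => v _; rewrite big1 ?xlog2x0 // => x _; exact: P0.
rewrite (bigD1_seq (g x0)) ?mem_values ?undup_uniq //= [X in _ + X]big1_seq ?addr0.
  congr xlog2x; rewrite /marginalY [RHS](bigID (fun x => g x == g x0)) /=.
  rewrite [X in _ = _ + X]big1 ?addr0 // => x /negP gx.
  by apply: P_eq0; apply: contra_notN gx => Px; apply/eqP; exact: gY Px Px0.
move=> v /andP [v_gx0 _]; rewrite big1 ?xlog2x0 // => x /eqP gv.
by apply/P_eq0/negP => Px; move: v_gx0; rewrite -gv (gY _ _ _ Px Px0) eqxx.
Qed.

(* Every row [x] through column [y] is proportional to the profile [r]. *)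
Lemma depX_eq_of_swap :
  (forall x y1 y2, 0 < P x y1 -> 0 < P x y2 -> depX (swapP P) y1 = depX (swapP P) y2) ->
  forall y x1 x2, 0 < P x1 y -> 0 < P x2 y -> depX P x1 = depX P x2.
Proof.
move=> swap_eq y x1 x2 Px1 Px2.
pose r y' := if [exists x, (0 < P x y') && (0 < P x y)]
             then marginalY P y' / marginalY P y else 0.
have le_marginal x y' : P x y' <= marginalY P y'.
  by apply: (ler_sum_term (F := P^~ y')) => x'; exact: P_ge0.
have row_prop x : 0 < P x y -> forall y', P x y' = r y' * P x y.
  move=> Pxy y'; rewrite /r; case: existsP => [[x0 /andP [Px0y' Px0y]]|no_x].
    have := congr1 (fun f : {ffun X -> R} => f x) (swap_eq x0 y' y Px0y' Px0y).
    rewrite !ffunE /marginalX /swapP -!/(marginalY P _) => E.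
    have PY0 : 0 < marginalY P y by apply: lt_le_trans Pxy (le_marginal x y).
    have PY0' : 0 < marginalY P y' by apply: lt_le_trans Px0y' (le_marginal x0 y').
    move/(congr1 (fun t => t * marginalY P y')): E; rewrite divfK ?gt_eqF // => ->.
    by field; rewrite gt_eqF.
  by rewrite mul0r; apply/P_eq0/negP => Pxy'; apply: no_x; exists x; rewrite Pxy Pxy'.
have depXE x : 0 < P x y -> forall y', P x y' / marginalX P x = r y' / \sum_y' r y'.
  move=> Pxy y'; rewrite /marginalX (eq_bigr _ (fun y' _ => row_prop x Pxy y')).
  rewrite -mulr_suml row_prop //.
  have [->|r_neq0] := eqVneq (\sum_y' r y') 0; first by rewrite !(mul0r, invr0, mulr0).
  by field; rewrite r_neq0 gt_eqF.
by apply/ffunP => y'; rewrite !ffunE depXE // depXE.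
Qed.

Lemma nontrivial_witness : nontrivial_primitive P ->
  exists y x1 x2, [/\ 0 < P x1 y, 0 < P x2 y & depX P x1 != depX P x2].
Proof.
move=> nt; apply: contrapT => no_wit; apply/nt/H_cond_eq0 => y x1 x2 Px1 Px2.
by apply/eqP/negPn/negP => neq; apply: no_wit; exists y, x1, x2.
Qed.

Lemma nontrivial_witness_swap : nontrivial_primitive P ->
  exists x y1 y2, [/\ 0 < P x y1, 0 < P x y2 & depX (swapP P) y1 != depX (swapP P) y2].
Proof.
move=> nt; apply: contrapT => no_wit; apply/nt/H_cond_eq0/depX_eq_of_swap.
move=> x y1 y2 Py1 Py2; apply/eqP/negPn/negP => neq.
by apply: no_wit; exists x, y1, y2.
Qed.

End Primitive.

Section CanonicalEmbedding.
Variables (R : realType) (X Y : finType) (P : X -> Y -> R).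

Lemma canonical_embeddingE x y : canonical_embedding P x y = (Num.sqrt (P x y))%:C.
Proof. by rewrite /canonical_embedding /regular_embedding cos0 sin0 mul1r. Qed.

Lemma canonical_embedding_overlap x1 x2 y : 0 < P x1 y -> 0 < P x2 y ->
  \sum_y' canonical_embedding P x1 y' * (canonical_embedding P x2 y')^* != 0.
Proof.
move=> Px1 Px2.
under eq_bigr => y' _ do rewrite !canonical_embeddingE conjC_realc -rmorphM.
rewrite -rmorph_sum fmorph_eq0 gt_eqF //.
apply: lt_le_trans (ler_sum_term y _) => [|y']; first by rewrite mulr_gt0 ?sqrtr_gt0.
by rewrite mulr_ge0 ?sqrtr_ge0.
Qed.

Lemma S_XdepY_B_canonical_gt0 :
  (exists y x1 x2, [/\ 0 < P x1 y, 0 < P x2 y & depX P x1 != depX P x2]) ->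
  0 < S_XdepY_B P (canonical_embedding P).
Proof.
move=> [y [x1 [x2 [Px1 Px2 dep12]]]]; apply: S_cond_gt0.
by exists x1, x2; split; last exact: canonical_embedding_overlap Px1 Px2.
Qed.

End CanonicalEmbedding.

Theorem lemma1 (R : realType) (X Y : finType) (P : X -> Y -> R) :
  is_primitive P -> nontrivial_primitive P ->
  0 < S_XdepY_B P (canonical_embedding P) /\
  0 < S_YdepX_A P (canonical_embedding P).
Proof.
move=> [P_ge0 _] nt; split; first exact/S_XdepY_B_canonical_gt0/nontrivial_witness.
(* [S_YdepX_A] is [S_XdepY_B] of the transposed distribution. *)
exact: (S_XdepY_B_canonical_gt0 (P := swapP P)) (nontrivial_witness_swap P_ge0 nt).
Qed.
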